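(* In the setting described in the context, let $\phi$ be an automorphism of the graph $\bar\Gamma$, let $\tau'=\phi(\tau)$ with root $r'=\phi(r)$, and let $wt'$ be the re-gauged weight function. Then: (1) There is at most one $*$-automorphism $\psi$ of $\mathscr A$ satisfying $\psi(wt(f))=wt'(\phi(f))$ for every oriented edge $f$; it is determined by the requirement $\psi(wt(f))=wt'(\phi(f))$ for the oriented edges $f$ not in $\tau$. (2) The elements $wt'(\phi(f))$, $f$ ranging over the oriented edges of $\bar\Gamma$, generate $\mathscr A$ as a $C^*$-algebra (so whether such a $\psi$ defines an automorphism only needs to be checked on the generators $wt(f)$). (3) $\psi$ is induced by a base change of $\pi_1(\bar\Gamma,r)$: there is a group automorphism $\beta$ of $\pi_1(\bar\Gamma,r)$ with $\beta([l^\tau(f)])=P([l^{\tau'}(\phi(f))])$ for every oriented edge $f$ not in $\tau$, and if $\psi$ as in (1) exists then $\psi(\rho(x))=\rho(\beta(x))$ for all $x\in\pi_1(\bar\Gamma,r)$.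
   Context: $\bar\Gamma$ is a finite connected graph (multiple edges and loops allowed); an oriented edge $f$ from $x$ to $y$ has reverse $\bar f$. An automorphism $\phi$ of $\bar\Gamma$ is a pair of bijections of the vertex set and of the edge set preserving incidence; it acts on oriented edges. $\tau$ is a spanning tree of $\bar\Gamma$ with root $r$. $\mathscr A$ is a unital $C^*$-algebra and $wt$ assigns to every oriented edge $f$ a unitary $wt(f)\in\mathscr A$ with $wt(\bar f)=wt(f)^*$, $wt(f)=1$ whenever the underlying edge lies in $\tau$, and such that $\mathscr A$ is generated as a $C^*$-algebra by all $wt(f)$. For a closed walk $\gamma$ at $r$ traversing $f_1,\dots,f_m$ in order put $\rho(\gamma)=wt(f_m)\cdots wt(f_1)$; this gives a group homomorphism $\rho:\pi_1(\bar\Gamma,r)\to U(\mathscr A)$. For a spanning tree $\sigma$ and vertices $x,y$ let $\sigma[x\to y]$ denote the unique non-backtracking path in $\sigma$ from $x$ to $y$. For an oriented edge $f$ from $x$ to $y$, $l^\tau(f)$ is the closed walk $\tau[r\to x]$, $f$, $\tau[y\to r]$ at $r$, and $l^{\tau'}(f)$ is the closed walk $\tau'[r'\to x]$, $f$, $\tau'[y\to r']$ at $r'$. $P:\pi_1(\bar\Gamma,r')\to\pi_1(\bar\Gamma,r)$ is the isomorphism $[\gamma]\mapsto[\tau[r\to r']\,\gamma\,\tau[r'\to r]]$. The re-gauged weight function for the pushed-forward spanning tree $\tau'$ is $wt'(f):=\rho(P([l^{\tau'}(f)]))$. *)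

From HB Require Import structures.
From mathcomp Require Import all_boot all_order all_algebra.
From mathcomp Require Import complex reals.

Set Implicit Arguments.
Unset Strict Implicit.
Unset Printing Implicit Defensive.

Import Order.TTheory GRing.Theory Num.Theory.
Local Open Scope ring_scope.

(* Graphs.  V = vertices, D = oriented edges, rev f = \bar f,          *)
Section Graph.
Variables (V D : finType) (rev : D -> D) (src : D -> V).

Definition tgt (f : D) : V := src (rev f).

(* rev is a fixed-point-free involution (loops and multi-edges allowed) *)
Definition graph_axioms : Prop := involutive rev /\ (forall f, rev f != f).

Fixpoint walk (x y : V) (g : seq D) : bool :=
  match g with
  | [::] => x == y
  | f :: g' => (src f == x) && walk (tgt f) y g'
  end.

Fixpoint reduced (g : seq D) : bool :=
  match g with
  | f :: ((h :: _) as g') => (h != rev f) && reduced g'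
  | _ => true
  end.

Definition walk_in (S : {set D}) (x y : V) (g : seq D) : bool :=
  walk x y g && all (fun f => f \in S) g.

Definition connected_graph : Prop := forall x y : V, exists g, walk x y g.

Definition is_cycle (g : seq D) : Prop :=
  exists x, [/\ g != [::], walk x x g, reduced g & uniq (map src g)].

Definition spanning_tree (tau : {set D}) : Prop :=
  [/\ forall f, (rev f \in tau) = (f \in tau),
      forall x y, exists g, walk_in tau x y g
    & forall g, all (fun f => f \in tau) g -> ~ is_cycle g].

(* tp x y is a non-backtracking path in tau from x to y; for a tree this
   is the unique such path tau[x -> y] *)
Definition tree_paths (tau : {set D}) (tp : V -> V -> seq D) : Prop :=
  forall x y, walk_in tau x y (tp x y) && reduced (tp x y).

Fixpoint reduce (g : seq D) : seq D :=
  match g with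
  | [::] => [::]
  | f :: g' =>
      match reduce g' with
      | h :: g'' => if h == rev f then g'' else f :: h :: g''
      | [::] => [:: f]
      end
  end.

(* elements of pi_1(Gamma, r) : reduced closed walks at r (normal forms
   of homotopy classes); the product of x and y is reduce (x ++ y) and the
   class of a closed walk g is reduce g *)
Definition pi1 (r : V) (g : seq D) : bool := walk r r g && reduced g.

Definition pi1_aut (r : V) (beta : seq D -> seq D) : Prop :=
  [/\ forall x, pi1 r x -> pi1 r (beta x),
      forall x y, pi1 r x -> pi1 r y ->
        beta (reduce (x ++ y)) = reduce (beta x ++ beta y),
      forall x y, pi1 r x -> pi1 r y -> beta x = beta y -> x = y
    & forall y, pi1 r y -> exists2 x, pi1 r x & beta x = y].

Definition graph_aut (phiV : V -> V) (phiD : D -> D) : Prop :=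
  [/\ bijective phiV, bijective phiD,
      forall f, phiD (rev f) = rev (phiD f)
    & forall f, src (phiD f) = phiV (src f)].

End Graph.

Section Cstar.
Variables (R : realType) (A : algType R[i]).
Local Open Scope complex_scope.

Definition cauchy_seq (nrm : A -> R) (u : nat -> A) : Prop :=
  forall e : R, 0 < e -> exists N, forall m n, (N <= m)%N -> (N <= n)%N ->
    nrm (u m - u n) < e.

Definition converges_to (nrm : A -> R) (u : nat -> A) (l : A) : Prop :=
  forall e : R, 0 < e -> exists N, forall n, (N <= n)%N -> nrm (u n - l) < e.

Record cstar_struct := CStar {
  star : A -> A;
  nrm : A -> R;
  star_invol : involutive star;
  star_add : forall a b, star (a + b) = star a + star b;
  star_scale : forall (c : R[i]) a, star (c *: a) = c^* *: star a;
  star_mul : forall a b, star (a * b) = star b * star a;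
  nrm_eq0 : forall a, nrm a = 0 -> a = 0;
  nrm_triangle : forall a b, nrm (a + b) <= nrm a + nrm b;
  nrm_scale : forall (c : R[i]) a, nrm (c *: a) = ComplexField.Normc.normc c * nrm a;
  nrm_submul : forall a b, nrm (a * b) <= nrm a * nrm b;
  nrm_cstar : forall a, nrm (star a * a) = nrm a ^+ 2;
  nrm_complete : forall u, cauchy_seq nrm u -> exists l, converges_to nrm u l
}.

Variable C : cstar_struct.

Definition unitary (u : A) : Prop :=
  star C u * u = 1 /\ u * star C u = 1.

Definition cstar_subalg (B : A -> Prop) : Prop :=
  B 1 /\
  [/\ forall a b, B a -> B b -> B (a + b),
      forall (c : R[i]) a, B a -> B (c *: a),
      forall a b, B a -> B b -> B (a * b),
      forall a, B a -> B (star C a)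
    & forall a, (forall e : R, 0 < e -> exists b, B b /\ nrm C (a - b) < e) -> B a].

Definition cstar_generates (S : A -> Prop) : Prop :=
  forall B, cstar_subalg B -> (forall s, S s -> B s) -> forall a, B a.

Definition star_aut (psi : A -> A) : Prop :=
  [/\ bijective psi,
      forall a b, psi (a + b) = psi a + psi b,
      forall (c : R[i]) a, psi (c *: a) = c *: psi a,
      forall a b, psi (a * b) = psi a * psi b
    & forall a, psi (star C a) = star C (psi a)].

End Cstar.

(* rho(f_1 ... f_m) = wt f_m * ... * wt f_1 *)
Definition rho (D : Type) (A : pzRingType) (wt : D -> A) (g : seq D) : A :=
  foldl (fun acc f => (wt f * acc)%R) 1%R g.

From Pilot Require Import Defs.
From HB Require Import structures.
From mathcomp Require Import all_boot all_order all_algebra.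
From mathcomp Require Import complex reals lra.

Set Implicit Arguments.
Unset Strict Implicit.
Unset Printing Implicit Defensive.

Import Order.TTheory GRing.Theory Num.Theory.
Local Open Scope ring_scope.

(* Let g(x) be the wt-holonomy of the tree path phi(tau)[r' -> x].  Since every
   closed walk inside a tree reduces to the empty walk, wt' is the gauge transform
   wt'(f) = g(tgt f)^-1 wt(f) g(src f), so the wt'-holonomy of a walk from x to y is
   g(y)^-1 rho(walk) g(x).  On loops at r' this gives psi o rho = rho o beta, where
   beta transports a loop along phi and back to r through tau[r -> r']; on the tree
   loops l(f) it writes wt(f) through wt'-holonomies and the unitary g(r), so the
   wt'(phi f) generate.  On tree edges both sides of (1) equal 1.  Uniqueness comes
   from automatic continuity: a small self-adjoint element is the mean of a unitary
   and its adjoint, hence a unital *-homomorphism satisfies |psi a| <= 2 |a|, and two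
   *-automorphisms agreeing on generators agree on the closed *-subalgebra these
   generate. *)

(** * Walks, free reduction and trees *)

Section FreeReduction.
Variables (D : finType) (rv : D -> D).
Hypothesis rvK : involutive rv.

Local Notation reduce := (reduce rv).
Local Notation reduced := (reduced rv).

Lemma reduced_behead f g : reduced (f :: g) -> reduced g.
Proof. by case: g => //= h g /andP[]. Qed.

Lemma reduced_reduce g : reduced (reduce g).
Proof.
elim: g => //= f g IH.
case E: (reduce g) IH => [|h t] // IH.
case: ifP => [_|/negbT hf]; first exact: reduced_behead IH.
by rewrite /= hf.
Qed.

Lemma reducedK g : reduced g -> reduce g = g.
Proof.
elim: g => //= f g IH Hg; rewrite IH; last exact: reduced_behead Hg.
by case: g Hg {IH} => //= h t /andP[/negbTE ->].
Qed.

Lemma reduceK g : reduce (reduce g) = reduce g.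
Proof. exact/reducedK/reduced_reduce. Qed.

Lemma reduce_cancel f g : reduce (f :: rv f :: g) = reduce g.
Proof.
rewrite /=; have := reduced_reduce g.
case: (reduce g) => [|h t] Ht; first by rewrite eqxx.
case: (eqVneq h f) Ht => [->|hf] Ht.
  rewrite rvK eqxx; case: t Ht => [|h' t] //=.
  by case/andP=> /negbTE ->.
have : (h == rv (rv f)) = false by rewrite rvK; exact/negbTE.
by move=> -> /=; rewrite eqxx.
Qed.

Lemma reduce_cons f g : reduce (f :: g) = reduce (f :: reduce g).
Proof. by rewrite /= reduceK. Qed.

Lemma reduce_catr u v : reduce (u ++ v) = reduce (u ++ reduce v).
Proof. by elim: u => [|f u IH] /=; rewrite ?reduceK // IH. Qed.

Lemma reduce_catl u v : reduce (u ++ v) = reduce (reduce u ++ v).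
Proof.
elim: u => [|f u IH] //=.
rewrite -/(reduce (f :: u ++ v)) reduce_cons IH -reduce_cons.
case: (reduce u) => [|h t] //; case: ifP => // /eqP ->.
by rewrite cat_cons reduce_cancel.
Qed.

Lemma reduce_catm u m w : reduce (u ++ reduce m ++ w) = reduce (u ++ m ++ w).
Proof. by rewrite reduce_catr -reduce_catl -reduce_catr. Qed.

Lemma reduce_cat_nil u m w :
  reduce m = [::] -> reduce (u ++ m ++ w) = reduce (u ++ w).
Proof. by move=> Hm; rewrite -reduce_catm Hm. Qed.

Lemma mem_reduce g : {subset reduce g <= g}.
Proof.
elim: g => //= e g IH f; rewrite in_cons.
case: (reduce g) IH => [|h t] IH; first by rewrite inE => ->.
case: ifP => _ Hf; first by rewrite IH ?orbT // inE Hf orbT.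
by move: Hf; rewrite in_cons => /orP[->|/IH ->]; rewrite ?orbT.
Qed.

Lemma reduced_cat g1 g2 : reduced (g1 ++ g2) =
  [&& reduced g1, reduced g2 &
     if g1 is e :: _ then (if g2 is h :: _ then h != rv (last e g1) else true)
     else true].
Proof.
elim: g1 => [|e g1 IH]; first by rewrite /= andbT.
case: g1 IH => [|e' g1] IH; first by case: g2 {IH} => [|h g2] //=; rewrite andbC.
have cons2 a b s : reduced [:: a, b & s] = (b != rv a) && reduced (b :: s) by [].
rewrite cat_cons cat_cons cons2 -cat_cons IH cons2.
by case: g2 {IH} => [|h g2]; rewrite ?andbT // !andbA.
Qed.

End FreeReduction.

Section Walks.
Variables (V D : finType) (rv : D -> D) (src : D -> V).
Hypothesis rvK : involutive rv.

Local Notation tgt := (tgt rv src).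
Local Notation walk := (walk rv src).
Local Notation reduce := (reduce rv).
Local Notation reduced := (reduced rv).

Lemma walk_cat x y g1 g2 :
  walk x y (g1 ++ g2) = walk x (last x (map tgt g1)) g1 && walk (last x (map tgt g1)) y g2.
Proof. by elim: g1 x => [|f g1 IH] x /=; rewrite ?eqxx // IH andbA. Qed.

Lemma walk_last x y g : walk x y g -> y = last x (map tgt g).
Proof. by elim: g x => [|f g IH] x /=; [move/eqP | case/andP=> _ /IH]. Qed.

Lemma walk_catP x z y g1 g2 : walk x z g1 -> walk z y g2 -> walk x y (g1 ++ g2).
Proof. by move=> H1 H2; rewrite walk_cat -(walk_last H1) H1. Qed.

Lemma walk_catE x y g1 g2 : walk x y (g1 ++ g2) -> exists z, walk x z g1 /\ walk z y g2.
Proof. by rewrite walk_cat => /andP[H1 H2]; exists (last x (map tgt g1)). Qed.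

Lemma walk_cons_src x y f g : walk x y (f :: g) -> src f = x.
Proof. by case/andP=> /eqP. Qed.

Lemma walk_reduce x y g : walk x y g -> walk x y (reduce g).
Proof.
elim: g x => //= f g IH x /andP[/eqP Hx /IH].
case: (reduce g) => [|h t] /=; first by rewrite Hx eqxx.
case: ifP => [/eqP ->|_] /=; last by rewrite Hx eqxx.
by rewrite /Defs.tgt rvK Hx => /andP[].
Qed.

Definition walk_rev (g : seq D) := rev (map rv g).

Lemma walk_rev_cons f g : walk_rev (f :: g) = rcons (walk_rev g) (rv f).
Proof. by rewrite /walk_rev /= rev_cons. Qed.

Lemma walk_walk_rev x y g : walk x y g -> walk y x (walk_rev g).
Proof.
elim: g x => [|f g IH] x /=; first by move/eqP ->; rewrite eqxx.
case/andP=> /eqP Hx /IH Hw; rewrite walk_rev_cons -cats1.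
by apply: (walk_catP Hw); rewrite /= /Defs.tgt rvK Hx !eqxx.
Qed.

Lemma reduced_walk_rev g : reduced g -> reduced (walk_rev g).
Proof.
elim: g => [|f g IH] // Hg.
rewrite walk_rev_cons -cats1 reduced_cat IH ?(reduced_behead Hg) //=.
case: g Hg {IH} => [|h t] //= /andP[hf _].
rewrite walk_rev_cons; case: (walk_rev t) => [|a b] /=; first by rewrite rvK eq_sym.
by rewrite last_rcons rvK eq_sym.
Qed.

Definition acyclic (S : {set D}) : Prop :=
  forall g, all (fun f => f \in S) g -> ~ is_cycle rv src g.

Lemma closed_walk_cycle (S : {set D}) x g :
  g != [::] -> walk x x g -> reduced g -> all (fun f => f \in S) g ->
  exists2 c, all (fun f => f \in S) c & is_cycle rv src c.
Proof.
elim: {g}_.+1 {-2}g x (ltnSn (size g)) => // n IH g x Hs Hne Hw Hr Ha.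
have [Hu|] := boolP (uniq (map src g)); first by exists g => //; exists x.
case: g Hne Hs Hw Hr Ha => // d0 g' _; set g := d0 :: g' => Hs Hw Hr Ha.
case/(uniqPn x) => i [j [ij]]; rewrite size_map => jn.
have iS : (i < size g)%N by apply: ltn_trans jn.
rewrite !(nth_map d0) // => Hsrc.
set m := take (j - i) (drop i g).
have Hdi : drop i g = m ++ drop j g.
  by rewrite -{1}(cat_take_drop (j - i) (drop i g)) drop_drop subnK // ltnW.
have Hg : g = take i g ++ m ++ drop j g by rewrite -Hdi cat_take_drop.
have Hsm : size m = (j - i)%N by rewrite size_takel // size_drop leq_sub2r // ltnW.
move: (Hw); rewrite {1}Hg => /walk_catE [z1 [_ /[dup] Hw1 /walk_catE [z2 [Hm Hw2]]]].
have E1 : src (nth d0 g i) = z1.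
  by move: Hw1; rewrite -Hdi (drop_nth d0 iS) => /walk_cons_src.
have E2 : src (nth d0 g j) = z2.
  by move: Hw2; rewrite (drop_nth d0 jn) => /walk_cons_src.
apply: (IH m z1).
- by rewrite Hsm (leq_ltn_trans (leq_subr _ _)) // (leq_trans jn).
- by rewrite -size_eq0 Hsm subn_eq0 -ltnNge.
- by rewrite {2}(_ : z1 = z2) // -E1 -E2.
- by move: Hr; rewrite Hg !reduced_cat => /and3P[_ /and3P[]].
- by apply/allP => f /mem_take /mem_drop; apply: (allP Ha).
Qed.

Section Acyclic.
Variable S : {set D}.
Hypothesis S_rv : forall f, (rv f \in S) = (f \in S).
Hypothesis S_acyclic : acyclic S.

Lemma acyclic_closed_walk_reduce x g :
  walk x x g -> all (fun f => f \in S) g -> reduce g = [::].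
Proof.
move=> Hw Ha; apply/eqP/negPn/negP => Hne.
have Har : all (fun f => f \in S) (reduce g).
  by apply/allP => e /mem_reduce He; apply: (allP Ha).
have [c Hc] := closed_walk_cycle Hne (walk_reduce Hw) (reduced_reduce _ g) Har.
exact: S_acyclic.
Qed.

Lemma acyclic_closed_reduced x g :
  walk x x g -> reduced g -> all (fun f => f \in S) g -> g = [::].
Proof. by move=> Hw Hr /(acyclic_closed_walk_reduce Hw); rewrite reducedK. Qed.

Lemma acyclic_path_uniq x y g h :
  walk x y g -> walk x y h -> reduced g -> reduced h ->
  all (fun f => f \in S) g -> all (fun f => f \in S) h -> g = h.
Proof.
elim/last_ind: g h y => [|g e IH] h y Hg Hh Rg Rh Ag Ah.
  by move/eqP: Hg Hh => <- Hh; rewrite (acyclic_closed_reduced Hh Rh Ah).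
case/lastP: h Hh Rh Ah => [|h e'] Hh Rh Ah.
  by move/eqP: Hh Hg => <- Hg; rewrite (acyclic_closed_reduced Hg Rg Ag).
have [Ee|ne] := eqVneq e e'.
  subst e'.
  move: Hg Hh Rg Rh Ag Ah; rewrite -!cats1 !all_cat !reduced_cat.
  move=> /walk_catE [z [Hg /andP[/eqP Ez _]]] /walk_catE [z' [Hh /andP[/eqP Ez' _]]].
  move=> /and3P[Rg _ _] /and3P[Rh _ _] /andP[Ag _] /andP[Ah _].
  by subst z z'; rewrite (IH h (src e)).
have Hrw : walk_rev (rcons h e') = rv e' :: walk_rev h by rewrite /walk_rev map_rcons rev_rcons.
set w := rcons g e ++ walk_rev (rcons h e').
suff : w = [::] by rewrite /w; case: (g).
apply: (acyclic_closed_reduced (x := x)); first exact: walk_catP Hg (walk_walk_rev Hh).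
  rewrite /w reduced_cat Rg reduced_walk_rev // Hrw /=.
  by case: (g) => [|? ?] /=; rewrite ?last_rcons (inj_eq (can_inj rvK)) eq_sym.
rewrite all_cat Ag all_rev all_map.
by apply/allP => f Hf /=; rewrite S_rv (allP Ah).
Qed.

End Acyclic.
End Walks.

Section TreePaths.
Variables (V D : finType) (rv : D -> D) (src : D -> V).
Variables (S : {set D}) (tp : V -> V -> seq D).
Hypothesis Htp : tree_paths rv src S tp.

Lemma tree_path_walk x y : walk rv src x y (tp x y).
Proof. by case/andP: (Htp x y) => /andP[]. Qed.

Lemma tree_path_reduced x y : reduced rv (tp x y).
Proof. by case/andP: (Htp x y). Qed.

Lemma tree_path_sub x y : all (fun f => f \in S) (tp x y).
Proof. by case/andP: (Htp x y) => /andP[]. Qed.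

Definition tree_loop (r : V) (f : D) : seq D :=
  tp r (src f) ++ f :: tp (tgt rv src f) r.

Lemma tree_loop_walk r f : walk rv src r r (tree_loop r f).
Proof.
apply: (walk_catP (tree_path_walk r (src f))).
by rewrite /= eqxx tree_path_walk.
Qed.

Hypothesis S_rv : forall f, (rv f \in S) = (f \in S).

(* A tree path consists of tree edges, so it cannot backtrack across f. *)
Lemma tree_loop_reduced r f : f \notin S -> reduced rv (tree_loop r f).
Proof.
move=> Hf; rewrite /tree_loop reduced_cat tree_path_reduced /=; apply/andP; split.
  have := tree_path_reduced (tgt rv src f) r; have := tree_path_sub (tgt rv src f) r.
  case: (tp _ r) => [|h t] //= /andP[Hh _] ->; rewrite andbT.
  by apply: contraNneq Hf => Eh; rewrite -S_rv -Eh.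
case E: (tp r (src f)) => [|e t] //.
apply: contraNneq Hf => ->; rewrite S_rv.
by apply: (allP (tree_path_sub r (src f))); rewrite E /= mem_last.
Qed.

End TreePaths.

(** * Graph automorphisms and the fundamental group *)

Section Morphisms.
Variables (V D : finType) (rv : D -> D) (src : D -> V).
Variables (m : D -> D) (mV : V -> V).
Hypothesis m_rv : forall f, m (rv f) = rv (m f).
Hypothesis m_src : forall f, src (m f) = mV (src f).

Lemma tgt_map f : tgt rv src (m f) = mV (tgt rv src f).
Proof. by rewrite /tgt -m_rv m_src. Qed.

Lemma walk_map x y g : walk rv src x y g -> walk rv src (mV x) (mV y) (map m g).
Proof.
elim: g x => [|f g IH] x /=; first by move/eqP ->.
by case/andP=> /eqP <- /IH; rewrite m_src tgt_map eqxx.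
Qed.

Hypothesis m_inj : injective m.

Lemma reduced_map g : reduced rv (map m g) = reduced rv g.
Proof.
elim: g => [|f g IH] //=.
by case: g IH => [|h g] //= ->; rewrite -m_rv (inj_eq m_inj).
Qed.

Lemma reduce_map g : reduce rv (map m g) = map m (reduce rv g).
Proof.
elim: g => [|f g IH] //=; rewrite IH.
by case: (reduce rv g) => [|h t] //=; rewrite -m_rv (inj_eq m_inj); case: ifP.
Qed.

Hypothesis mV_inj : injective mV.

Lemma is_cycle_map g : is_cycle rv src g -> is_cycle rv src (map m g).
Proof.
case=> x [Hne Hw Hr Hu]; exists (mV x); split.
- by case: g Hne {Hw Hr Hu}.
- exact: walk_map.
- by rewrite reduced_map.
- by rewrite -map_comp (eq_map m_src) map_comp map_inj_uniq.
Qed.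

End Morphisms.

Section FundamentalGroup.
Variables (V D : finType) (rv : D -> D) (src : D -> V).
Hypothesis rvK : involutive rv.

Local Notation walk := (walk rv src).
Local Notation reduce := (reduce rv).
Local Notation pi1 := (pi1 rv src).

Definition pi1_iso (r s : V) (beta : seq D -> seq D) : Prop :=
  [/\ forall x, pi1 r x -> pi1 s (beta x),
      forall x y, pi1 r x -> pi1 r y ->
        beta (reduce (x ++ y)) = reduce (beta x ++ beta y),
      forall x y, pi1 r x -> pi1 r y -> beta x = beta y -> x = y
    & forall y, pi1 s y -> exists2 x, pi1 r x & beta x = y].

Lemma pi1_iso_comp r s t b1 b2 :
  pi1_iso r s b1 -> pi1_iso s t b2 -> pi1_iso r t (b2 \o b1).
Proof.
case=> pi1_1 hom1 inj1 surj1 [pi1_2 hom2 inj2 surj2]; split=> /=.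
- by move=> x /pi1_1 /pi1_2.
- by move=> x y Hx Hy; rewrite hom1 // hom2 // pi1_1.
- by move=> x y Hx Hy /inj2 E; apply: inj1 => //; apply: E; apply: pi1_1.
- move=> z /surj2 [y /surj1 [x Hx <-] <-]; by exists x.
Qed.

Section BaseChange.
Variables (r s : V) (p q : seq D).
Hypotheses (Hp : walk r s p) (Hq : walk s r q).
Hypotheses (Hpq : reduce (p ++ q) = [::]) (Hqp : reduce (q ++ p) = [::]).

Lemma reduce_conjK x : reduced rv x -> reduce (q ++ reduce (p ++ x ++ q) ++ p) = x.
Proof.
move=> Hx; rewrite reduce_catm //.
have -> : q ++ (p ++ x ++ q) ++ p = (q ++ p) ++ x ++ (q ++ p) by rewrite !catA.
by rewrite reduce_catl // Hqp /= reduce_catr // Hqp cats0 reducedK.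
Qed.

Lemma pi1_conj x : pi1 s x -> pi1 r (reduce (p ++ x ++ q)).
Proof.
case/andP=> Hx _; rewrite /Defs.pi1 reduced_reduce andbT walk_reduce //.
exact: (walk_catP Hp (walk_catP Hx Hq)).
Qed.

End BaseChange.

Lemma pi1_iso_conj r s p q : walk r s p -> walk s r q ->
  reduce (p ++ q) = [::] -> reduce (q ++ p) = [::] ->
  pi1_iso s r (fun g => reduce (p ++ g ++ q)).
Proof.
move=> Hp Hq Hpq Hqp; split.
- exact: (pi1_conj Hp Hq).
- move=> x y _ _; rewrite reduce_catm // -reduce_catl // -reduce_catr //.
  have -> : (p ++ x ++ q) ++ p ++ y ++ q = (p ++ x) ++ (q ++ p) ++ (y ++ q).
    by rewrite !catA.
  by rewrite (reduce_cat_nil rvK (p ++ x) _ Hqp) -!catA.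
- move=> x y /andP[_ Rx] /andP[_ Ry] E.
  by rewrite -(reduce_conjK Hqp Rx) E (reduce_conjK Hqp Ry).
- move=> y /[dup] Hy /andP[_ Ry]; exists (reduce (q ++ y ++ p)); first exact: (pi1_conj Hq Hp Hy).
  by rewrite (reduce_conjK Hpq).
Qed.

End FundamentalGroup.

Section GraphAutomorphism.
Variables (V D : finType) (rv : D -> D) (src : D -> V).
Hypothesis rvK : involutive rv.
Variables (phiV phiV' : V -> V) (phiD phiD' : D -> D).
Hypotheses (phiVK : cancel phiV phiV') (phiVK' : cancel phiV' phiV).
Hypotheses (phiDK : cancel phiD phiD') (phiDK' : cancel phiD' phiD).
Hypothesis phi_rv : forall f, phiD (rv f) = rv (phiD f).
Hypothesis phi_src : forall f, src (phiD f) = phiV (src f).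

Lemma inv_aut_rv f : phiD' (rv f) = rv (phiD' f).
Proof. by apply: (can_inj phiDK); rewrite phiDK' phi_rv phiDK'. Qed.

Lemma inv_aut_src f : src (phiD' f) = phiV' (src f).
Proof. by apply: (can_inj phiVK); rewrite -phi_src !phiDK' phiVK'. Qed.

Lemma mem_imset_aut (S : {set D}) f : (f \in phiD @: S) = (phiD' f \in S).
Proof.
apply/imsetP/idP => [[t Ht ->]|Hf]; first by rewrite phiDK.
by exists (phiD' f); rewrite ?phiDK'.
Qed.

Variable S : {set D}.
Hypothesis S_rv : forall f, (rv f \in S) = (f \in S).
Hypothesis S_acyclic : acyclic rv src S.

Lemma imset_aut_rv f : (rv f \in phiD @: S) = (f \in phiD @: S).
Proof. by rewrite !mem_imset_aut inv_aut_rv S_rv. Qed.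

Lemma acyclic_imset_aut : acyclic rv src (phiD @: S).
Proof.
move=> g Hg /(is_cycle_map inv_aut_rv inv_aut_src (can_inj phiDK') (can_inj phiVK')).
apply: S_acyclic; rewrite all_map.
by apply/allP => f /(allP Hg) /=; rewrite mem_imset_aut.
Qed.

Lemma pi1_iso_map r : pi1_iso rv src r (phiV r) (map phiD).
Proof.
have phiD_inj := can_inj phiDK; have phiD'_inj := can_inj phiDK'.
split.
- move=> x /andP[Hw Hr]; apply/andP; split; last by rewrite reduced_map.
  exact: walk_map.
- by move=> x y _ _; rewrite -map_cat reduce_map.
- by move=> x y _ _; apply: inj_map.
- move=> y /andP[Hw Hr]; exists (map phiD' y); last by rewrite (mapK phiDK').
  apply/andP; split; last by rewrite (reduced_map inv_aut_rv).
  by rewrite -{1 2}[r]phiVK (walk_map inv_aut_rv inv_aut_src).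
Qed.

Variables (tp tp' : V -> V -> seq D).
Hypotheses (Htp : tree_paths rv src S tp) (Htp' : tree_paths rv src (phiD @: S) tp').

Lemma map_tree_path x y : map phiD (tp x y) = tp' (phiV x) (phiV y).
Proof.
apply: (acyclic_path_uniq rvK imset_aut_rv acyclic_imset_aut (x := phiV x) (y := phiV y)).
- exact: (walk_map phi_rv phi_src (tree_path_walk Htp x y)).
- exact: (tree_path_walk Htp' _ _).
- by rewrite reduced_map ?(tree_path_reduced Htp) //; apply: can_inj phiDK.
- exact: (tree_path_reduced Htp' _ _).
- by rewrite all_map; apply/allP => f /(allP (tree_path_sub Htp x y)) /= /imset_f ->.
- exact: (tree_path_sub Htp' _ _).
Qed.

Lemma map_tree_loop r f :
  map phiD (tree_loop rv src tp r f) = tree_loop rv src tp' (phiV r) (phiD f).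
Proof.
by rewrite /tree_loop map_cat /= !map_tree_path phi_src (tgt_map phi_rv phi_src).
Qed.

End GraphAutomorphism.

(** * Automatic continuity of *-homomorphisms *)

Section CStarAlgebra.
Variables (R : realType) (A : algType R[i]) (C : cstar_struct A).
Local Notation "a ^*" := (star C a) : ring_scope.
Local Notation "`| a |" := (nrm C a) : ring_scope.
Local Notation normc := ComplexField.Normc.normc.

Lemma normc_real (k : R) : 0 <= k -> normc k%:C%C = k.
Proof. by move=> k_ge0; rewrite /normc /= expr0n /= addr0 sqrtr_sqr ger0_norm. Qed.

Lemma star0 : 0^* = 0 :> A.
Proof. by apply: (addrI 0^*); rewrite -star_add !addr0. Qed.

Lemma starN a : (- a)^* = - a^*.
Proof. by apply: (addrI a^*); rewrite -star_add !subrr star0. Qed.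

Lemma starB a b : (a - b)^* = a^* - b^*.
Proof. by rewrite star_add starN. Qed.

Lemma star1 : 1^* = 1 :> A.
Proof. by have := star_mul C 1^* 1; rewrite mulr1 !star_invol mulr1 => <-. Qed.

Lemma nrm0 : `|0| = 0.
Proof. by have := nrm_scale C 0 0; rewrite scale0r ComplexField.Normc.normc0 mul0r. Qed.

Lemma nrmN a : `|- a| = `|a|.
Proof. by rewrite -scaleN1r nrm_scale normcN ComplexField.Normc.normc1 mul1r. Qed.

Lemma nrm_ge0 a : 0 <= `|a|.
Proof. by have := nrm_triangle C a (- a); rewrite subrr nrm0 nrmN; lra. Qed.

Lemma nrm_distC a b : `|a - b| = `|b - a|.
Proof. by rewrite -nrmN opprB. Qed.

Lemma nrm_le_eq0 (K : R) a : 0 <= K -> (forall e, 0 < e -> `|a| <= K * e) -> a = 0.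
Proof.
move=> K_ge0 Ha; apply: (@nrm_eq0 _ _ C); apply/eqP; rewrite eq_le nrm_ge0 andbT.
apply/ler_addgt0Pr => e e_gt0; rewrite add0r.
have K1_gt0 : 0 < K + 1 by lra.
apply: le_trans (Ha _ (divr_gt0 e_gt0 K1_gt0)) _.
by rewrite mulrCA ger_pMr // ler_pdivrMr //; lra.
Qed.

Lemma nrm_star a : `|a^*| = `|a|.
Proof.
have le_star b : `|b| <= `|b^*|.
  have [->|b_neq0] := eqVneq `|b| 0; first exact: nrm_ge0.
  have b_gt0 : 0 < `|b| by rewrite lt_def b_neq0 nrm_ge0.
  by rewrite -(ler_pM2r b_gt0) -expr2 -nrm_cstar nrm_submul.
by apply/eqP; rewrite eq_le le_star -[X in _ <= `|X|](star_invol C a) le_star.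
Qed.

Lemma nrm1_le1 : `|1 : A| <= 1.
Proof.
have := nrm_cstar C 1; rewrite star1 mulr1 expr2.
have [->|n1_neq0 n1] := eqVneq `|1 : A| 0; first by rewrite ler01.
by rewrite -[X in X <= _](mulIf n1_neq0 (etrans (mul1r _) n1)).
Qed.

Lemma nrm_unitary_le1 u : u^* * u = 1 -> `|u| <= 1.
Proof.
move=> uu; have := nrm_cstar C u; rewrite uu => nu.
by rewrite -(expr_le1 (n := 2)) // ?nrm_ge0 // -nu nrm1_le1.
Qed.

Definition halfC : R[i] := (2^-1 : R)%:C%C.

Lemma nrm_half a : `|halfC *: a| = 2^-1 * `|a|.
Proof. by rewrite nrm_scale normc_real // invr_ge0 ler0n. Qed.

Lemma star_half a : (halfC *: a)^* = halfC *: a^*.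
Proof. by rewrite star_scale; congr (_ *: _); apply/eqP; rewrite eq_complex /= oppr0 !eqxx. Qed.

Lemma half_addK (a : A) : halfC *: (a + a) = a.
Proof.
have -> : halfC *: (a + a) = (halfC + halfC) *: a by rewrite scalerDr scalerDl.
by rewrite /halfC -rmorphD /= (_ : 2^-1 + 2^-1 = 1 :> R) ?scale1r //; lra.
Qed.

Lemma halfn_lt (e : R) : 0 < e -> exists M : nat, 4 * (2^-1) ^+ M < e.
Proof.
move=> e_gt0; set M := Num.Def.archi_bound (4 / e); exists M.
have hM : 4 / e < M%:R by apply: archi_boundP; rewrite ltW // divr_gt0.
have h2 : (M%:R : R) <= (2 ^ M)%:R by rewrite ler_nat ltnW // ltn_expl.
have hP : (0 : R) < (2 ^ M)%:R by rewrite ltr0n expn_gt0.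
rewrite exprVn -natrX ltr_pdivrMr // mulrC.
rewrite ltr_pdivrMr // in hM.
have : M%:R * e <= (2 ^ M)%:R * e by rewrite ler_wpM2r // ltW.
lra.
Qed.

(* The iteration y <- (x + y^2)/2 contracts near 0; its limit y satisfies
   (1 - y)^2 = 1 - x, so 1 - y is a square root of 1 - x. *)
Fixpoint sqrt_iter (x : A) (n : nat) : A :=
  if n is n'.+1 then halfC *: (x + sqrt_iter x n' * sqrt_iter x n') else 0.

Section SqrtIteration.
Variable x : A.
Hypothesis x_sa : x^* = x.
Hypothesis x_small : `|x| <= 16^-1.
Local Notation y := (sqrt_iter x).

Lemma sqrt_iter_le n : `|y n| <= 8^-1.
Proof.
elim: n => [|n IH] /=; first by rewrite nrm0; lra.
rewrite nrm_half.
have h1 := nrm_triangle C x (y n * y n).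
have h2 := nrm_submul C (y n) (y n).
have h3 : `|y n| * `|y n| <= 8^-1 * 8^-1 by apply: ler_pM; rewrite ?nrm_ge0.
have := le_trans h1 (lerD x_small (le_trans h2 h3)); lra.
Qed.

Lemma sqrt_iter_star n : (y n)^* = y n.
Proof. by elim: n => [|n IH] /=; rewrite ?star0 // star_half star_add star_mul IH x_sa. Qed.

Lemma sqrt_iter_comm n w : w * x = x * w -> w * y n = y n * w.
Proof.
move=> wx; elim: n => [|n IH] /=; first by rewrite mulr0 mul0r.
by rewrite -scalerAr -scalerAl mulrDr mulrDl wx mulrA IH -!mulrA IH.
Qed.

Lemma sqrt_iter_step n : `|y n.+1 - y n| <= (2^-1) ^+ n.
Proof.
elim: n => [|n IH].
  by rewrite /= subr0 mulr0 addr0 nrm_half expr0; have := x_small; lra.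
have yy : y n.+1 * y n = y n * y n.+1.
  by rewrite (sqrt_iter_comm n (w := y n.+1)) // (sqrt_iter_comm n.+1 (w := x)).
have -> : y n.+2 - y n.+1 = halfC *: ((y n.+1 + y n) * (y n.+1 - y n)).
  rewrite [y n.+2]/= [in X in _ - X]/= -scalerBr; congr (_ *: _).
  rewrite mulrDl !mulrBr yy addrA subrK.
  by rewrite opprD addrACA subrr add0r.
have hA : `|y n.+1 + y n| <= 4^-1.
  have := nrm_triangle C (y n.+1) (y n); have := sqrt_iter_le n.+1.
  have := sqrt_iter_le n; lra.
have hB := nrm_submul C (y n.+1 + y n) (y n.+1 - y n).
have hC := ler_pM (nrm_ge0 _) (nrm_ge0 _) hA IH.
have hD : 0 <= (2^-1 : R) ^+ n by rewrite exprn_ge0 // invr_ge0 ler0n.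
rewrite nrm_half exprS; lra.
Qed.

Lemma sqrt_iter_shift n k :
  `|y (n + k) - y n| <= 2 * (2^-1) ^+ n - 2 * (2^-1) ^+ (n + k).
Proof.
elim: k => [|k IH]; first by rewrite addn0 subrr nrm0 subrr.
have -> : y (n + k.+1) - y n = (y (n + k).+1 - y (n + k)) + (y (n + k) - y n).
  by rewrite addnS addrA subrK.
have := nrm_triangle C (y (n + k).+1 - y (n + k)) (y (n + k) - y n).
have := sqrt_iter_step (n + k); rewrite addnS exprS; lra.
Qed.

Lemma sqrt_iter_cauchy : cauchy_seq (nrm C) y.
Proof.
move=> e e_gt0; have [M HM] := halfn_lt e_gt0; exists M => m n hm hn.
have hb k : `|y (M + k) - y M| <= 2 * (2^-1) ^+ M.
  have := sqrt_iter_shift M k.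
  have : 0 <= (2^-1 : R) ^+ (M + k) by rewrite exprn_ge0 // invr_ge0 ler0n.
  lra.
have -> : y m - y n = (y m - y M) - (y n - y M) by rewrite opprB addrA subrK.
have := hb (m - M)%N; have := hb (n - M)%N; rewrite !subnKC //.
have := nrm_triangle C (y m - y M) (- (y n - y M)); rewrite nrmN; lra.
Qed.

Lemma sqrt_iter_limit : exists l, [/\ l^* = l, l = halfC *: (x + l * l) &
  forall w, w * x = x * w -> w * l = l * w].
Proof.
have [l Hl] := nrm_complete sqrt_iter_cauchy; exists l.
have near e : 0 < e -> exists n, `|y n - l| < e /\ `|y n.+1 - l| < e.
  by move=> e_gt0; have [K HK] := Hl e e_gt0; exists K; split; apply: HK.
have l_le : `|l| <= 8^-1.
  apply/ler_addgt0Pr => e e_gt0; have [n [hn _]] := near e e_gt0.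
  have -> : l = y n - (y n - l) by rewrite opprB addrC subrK.
  have := nrm_triangle C (y n) (- (y n - l)); rewrite nrmN.
  have := sqrt_iter_le n; lra.
split.
- apply/eqP; rewrite -subr_eq0; apply/eqP; apply: (@nrm_le_eq0 2) => // e e_gt0.
  have [n [hn _]] := near e e_gt0.
  have -> : l^* - l = (l - y n)^* + (y n - l) by rewrite starB sqrt_iter_star addrA subrK.
  have := nrm_triangle C (l - y n)^* (y n - l).
  by rewrite nrm_star nrm_distC; lra.
- apply/eqP; rewrite -subr_eq0; apply/eqP; apply: (@nrm_le_eq0 2) => // e e_gt0.
  have [n [hn hn1]] := near e e_gt0.
  have -> : l - halfC *: (x + l * l) =
      (l - y n.+1) + halfC *: (y n * (y n - l) + (y n - l) * l).
    rewrite [y n.+1]/= mulrBr mulrBl addrA subrK scalerBr !scalerDr.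
    by rewrite !opprD !addrA subrK.
  have h1 := ler_pM (nrm_ge0 _) (nrm_ge0 _) (sqrt_iter_le n) (ltW hn).
  have h2 := ler_pM (nrm_ge0 _) (nrm_ge0 _) (ltW hn) l_le.
  have h3 := nrm_submul C (y n) (y n - l); have h4 := nrm_submul C (y n - l) l.
  have h5 := nrm_triangle C (y n * (y n - l)) ((y n - l) * l).
  have := nrm_triangle C (l - y n.+1) (halfC *: (y n * (y n - l) + (y n - l) * l)).
  rewrite nrm_half nrm_distC; lra.
- move=> w wx; apply/eqP; rewrite -subr_eq0; apply/eqP.
  apply: (@nrm_le_eq0 (2 * `|w|)); first by rewrite mulr_ge0 // nrm_ge0.
  move=> e e_gt0; have [n [hn _]] := near e e_gt0.
  have -> : w * l - l * w = w * (l - y n) + (y n - l) * w.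
    by rewrite mulrBr mulrBl (sqrt_iter_comm n wx) addrA subrK.
  have h1 := ler_pM (nrm_ge0 _) (nrm_ge0 _) (le_refl `|w|) (ltW hn).
  have h2 := ler_pM (nrm_ge0 _) (nrm_ge0 _) (ltW hn) (le_refl `|w|).
  have h3 := nrm_submul C w (l - y n); rewrite nrm_distC in h3.
  have h4 := nrm_submul C (y n - l) w.
  have := nrm_triangle C (w * (l - y n)) ((y n - l) * w); nra.
Qed.

Lemma sqrt_one_sub : exists s, [/\ s^* = s, s * s = 1 - x &
  forall w, w * x = x * w -> w * s = s * w].
Proof.
have [l [l_sa l_fix l_comm]] := sqrt_iter_limit.
have ll : l + l = x + l * l by rewrite {1 2}l_fix -scalerDr half_addK.
exists (1 - l); split.
- by rewrite starB star1 l_sa.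
- rewrite mulrBl mul1r mulrBr mulr1.
  have -> : 1 - l - (l - l * l) = 1 - (l + l) + l * l.
    by rewrite opprB opprD !addrA addrAC.
  by rewrite ll opprD addrA subrK.
- by move=> w wx; rewrite mulrBr mulrBl mulr1 mul1r (l_comm w wx).
Qed.

End SqrtIteration.

(* u = ((u + i s) + (u + i s)^* ) / 2 with s = sqrt (1 - u^2) makes u + i s unitary. *)
Lemma selfadjoint_unitary_mean u : u^* = u -> `|u| <= 4^-1 ->
  exists z, z^* * z = 1 /\ u = halfC *: (z + z^*).
Proof.
move=> u_sa u_small.
have uu_small : `|u * u| <= 16^-1.
  have := nrm_submul C u u; have := ler_pM (nrm_ge0 u) (nrm_ge0 u) u_small u_small.
  lra.
have uu_sa : (u * u)^* = u * u by rewrite star_mul u_sa.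
have [s [s_sa ss s_comm]] := sqrt_one_sub uu_sa uu_small.
have us : u * s = s * u by apply: s_comm; rewrite mulrA.
have zE : (u + 'i%C *: s)^* = u - 'i%C *: s.
  by rewrite star_add star_scale u_sa s_sa -scaleNr; congr (_ + _ *: _); apply/eqP;
     rewrite eq_complex /= oppr0 !eqxx.
exists (u + 'i%C *: s); split.
  rewrite zE mulrDr !mulrBl -!scalerAl -!scalerAr us scalerA.
  have ii : ('i%C * 'i%C : R[i]) = -1 by rewrite -expr2 sqr_i.
  by rewrite ii scaleN1r opprK addrA subrK ss addrC subrK.
by rewrite zE addrACA subrr addr0 half_addK.
Qed.

Section StarHomomorphism.
Variable psi : A -> A.
Hypothesis psiD : forall a b, psi (a + b) = psi a + psi b.
Hypothesis psiZ : forall (c : R[i]) a, psi (c *: a) = c *: psi a.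
Hypothesis psiM : forall a b, psi (a * b) = psi a * psi b.
Hypothesis psi_star : forall a, psi a^* = (psi a)^*.
Hypothesis psi1 : psi 1 = 1.

Lemma star_hom0 : psi 0 = 0.
Proof. by apply: (addrI (psi 0)); rewrite -psiD !addr0. Qed.

Lemma star_homB a b : psi (a - b) = psi a - psi b.
Proof.
have psiN c : psi (- c) = - psi c.
  by apply: (addrI (psi c)); rewrite -psiD !subrr star_hom0.
by rewrite psiD psiN.
Qed.

Lemma star_hom_nrm_le1 a : `|a| <= 2^-1 -> `|psi a| <= 1.
Proof.
move=> a_small; set u := a^* * a.
have u_sa : u^* = u by rewrite /u star_mul star_invol.
have u_small : `|u| <= 4^-1.
  rewrite /u nrm_cstar expr2.
  by have := ler_pM (nrm_ge0 a) (nrm_ge0 a) a_small a_small; lra.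
have [z [zz uE]] := selfadjoint_unitary_mean u_sa u_small.
have psi_z : `|psi z| <= 1 by apply: nrm_unitary_le1; rewrite -psi_star -psiM zz.
have psi_u : `|psi u| <= 1.
  rewrite uE psiZ psiD psi_star nrm_half.
  by have := nrm_triangle C (psi z) (psi z)^*; rewrite nrm_star; lra.
have : `|psi a| ^+ 2 <= 1 by rewrite -nrm_cstar -psi_star -psiM.
by rewrite expr_le1 // nrm_ge0.
Qed.

Lemma star_hom_lipschitz a : `|psi a| <= 2 * `|a|.
Proof.
have [a0|a_neq0] := eqVneq `|a| 0.
  by rewrite (@nrm_eq0 _ _ C _ a0) star_hom0 nrm0 mulr0.
have a_gt0 : 0 < `|a| by rewrite lt_def a_neq0 nrm_ge0.
set c := (2 * `|a|)^-1.
have c_gt0 : 0 < c by rewrite invr_gt0 mulr_gt0.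
have ca_small : `|c%:C%C *: a| <= 2^-1.
  by rewrite nrm_scale (normc_real (ltW c_gt0)) /c invfM -mulrA mulVf ?mulr1.
have := star_hom_nrm_le1 ca_small; rewrite psiZ nrm_scale (normc_real (ltW c_gt0)) => h.
have -> : `|psi a| = (2 * `|a|) * (c * `|psi a|).
  by rewrite mulrA mulfV ?mul1r // gt_eqF // mulr_gt0.
by rewrite -[X in _ <= X]mulr1 ler_wpM2l // mulr_ge0 // nrm_ge0.
Qed.

End StarHomomorphism.

Lemma star_aut1 psi : star_aut C psi -> psi 1 = 1.
Proof. by case=> [[g _ gK] _ _ psiM _]; have := psiM 1 (g 1); rewrite mul1r gK mulr1. Qed.

(* Automorphisms are continuous, so the set where two of them agree is a
   C*-subalgebra. *)
Lemma star_aut_eq (S : A -> Prop) psi1 psi2 :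
  star_aut C psi1 -> star_aut C psi2 -> cstar_generates C S ->
  (forall s, S s -> psi1 s = psi2 s) -> psi1 =1 psi2.
Proof.
move=> aut1 aut2 genS eqS; apply: genS => //.
have L1 := star_hom_lipschitz; have one1 := star_aut1 aut1; have one2 := star_aut1 aut2.
case: aut1 => _ D1 Z1 M1 T1; case: aut2 => _ D2 Z2 M2 T2.
split; first by rewrite one1 one2.
split=> [a b ha hb|c a ha|a b ha hb|a ha|a near].
- by rewrite D1 D2 ha hb.
- by rewrite Z1 Z2 ha.
- by rewrite M1 M2 ha hb.
- by rewrite T1 T2 ha.
apply/eqP; rewrite -subr_eq0; apply/eqP; apply: (@nrm_le_eq0 4) => // e e_gt0.
have [b [eq_b ab]] := near e e_gt0.
have -> : psi1 a - psi2 a = psi1 (a - b) - psi2 (a - b).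
  by rewrite (star_homB D1) (star_homB D2) eq_b opprB addrA subrK.
have := L1 _ D1 Z1 M1 T1 one1 (a - b); have := L1 _ D2 Z2 M2 T2 one2 (a - b).
have := nrm_triangle C (psi1 (a - b)) (- psi2 (a - b)); rewrite nrmN; lra.
Qed.

End CStarAlgebra.

(** * Holonomy and re-gauging *)

Section Holonomy.
Variables (D : Type) (A : pzRingType) (w : D -> A).

Lemma rho_foldl g a : foldl (fun acc f => w f * acc) a g = rho w g * a.
Proof. by elim: g a => [|f g IH] a /=; rewrite ?mul1r // /rho /= !IH mulr1 mulrA. Qed.

Lemma rho_cons f g : rho w (f :: g) = rho w g * w f.
Proof. by rewrite /rho /= rho_foldl mulr1. Qed.

Lemma rho_cat g1 g2 : rho w (g1 ++ g2) = rho w g2 * rho w g1.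
Proof. by rewrite /rho foldl_cat rho_foldl. Qed.

Lemma rho_eq1 (S : pred D) g : {in S, forall f, w f = 1} -> all S g -> rho w g = 1.
Proof.
move=> w1; elim: g => [|f g IH] //= /andP[Sf Sg].
by rewrite rho_cons IH // w1 // mulr1.
Qed.

End Holonomy.

Lemma eq_rho (D : Type) (A : pzRingType) (w1 w2 : D -> A) : w1 =1 w2 -> rho w1 =1 rho w2.
Proof. by move=> eq_w; elim=> [|f g IH] //; rewrite !rho_cons IH eq_w. Qed.

Lemma rho_map (D : Type) (A B : pzRingType) (w : D -> A) (psi : A -> B) (m : D -> D) (w' : D -> B) :
  psi 1 = 1 -> {morph psi : a b / a * b} -> (forall f, psi (w f) = w' (m f)) ->
  forall g, psi (rho w g) = rho w' (map m g).
Proof.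
move=> psi1 psiM psi_w; elim=> [|f g IH]; first exact: psi1.
by rewrite -[map m (f :: g)]/(m f :: map m g) !rho_cons psiM IH psi_w.
Qed.

Lemma rho_reduce (D : finType) (A : pzRingType) (w : D -> A) (rv : D -> D) :
  (forall f, w (rv f) * w f = 1) -> forall g, rho w (reduce rv g) = rho w g.
Proof.
move=> w_rv; elim=> [|f g IH] //=; rewrite rho_cons -IH.
case: (reduce rv g) => [|h t] /=; first by rewrite rho_cons.
by case: ifP => [/eqP ->|_]; rewrite !rho_cons // -mulrA w_rv mulr1.
Qed.

Lemma rho_unitary (R : realType) (A : algType R[i]) (C : cstar_struct A) (D : Type)
  (w : D -> A) :
  (forall f, star C (w f) * w f = 1) -> forall g, star C (rho w g) * rho w g = 1.
Proof.
move=> w_unit; elim=> [|f g IH]; first by rewrite /= star1 mulr1.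
by rewrite rho_cons star_mul -mulrA (mulrA (star C (rho w g))) IH mul1r w_unit.
Qed.

Section Gauge.
Variables (V D : finType) (rv : D -> D) (src : D -> V) (A : pzRingType).
Variables (w : D -> A) (a b : V -> A).
Hypotheses (ab : forall x, a x * b x = 1) (ba : forall x, b x * a x = 1).

Lemma rho_gauge x y g : walk rv src x y g ->
  rho (fun f => b (tgt rv src f) * w f * a (src f)) g = b y * rho w g * a x.
Proof.
elim: g x => [|f g IH] x /=; first by move/eqP ->; rewrite mulr1 ba.
case/andP=> /eqP <- /IH IHg; rewrite rho_cons IHg rho_cons !mulrA.
by rewrite -(mulrA (b y * rho w g)) ab mulr1.
Qed.

End Gauge.

Section Regauge.
Variables (V D : finType) (rv : D -> D) (src : D -> V).
Hypothesis rvK : involutive rv.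
Variables (tau : {set D}) (tp : V -> V -> seq D).
Hypotheses (tau_rv : forall f, (rv f \in tau) = (f \in tau)) (tau_acyclic : acyclic rv src tau).
Hypothesis Htp : tree_paths rv src tau tp.
Variables (phiV : V -> V) (phiD : D -> D).
Hypothesis Hphi : graph_aut rv src phiV phiD.
Variable tp' : V -> V -> seq D.
Hypothesis Htp' : tree_paths rv src (phiD @: tau) tp'.
Variable r : V.

Local Notation r' := (phiV r).
Local Notation P g := (tp r r' ++ g ++ tp r' r).
Local Notation tree_loop' := (tree_loop rv src tp' r').

Lemma tree_path_cancel x y : reduce rv (tp x y ++ tp y x) = [::].
Proof.
apply: (acyclic_closed_walk_reduce rvK tau_acyclic (x := x)).
  exact: walk_catP (tree_path_walk Htp x y) (tree_path_walk Htp y x).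
by rewrite all_cat !(tree_path_sub Htp).
Qed.

Lemma pi1_aut_base_change : pi1_aut rv src r (fun x => reduce rv (P (map phiD x))).
Proof.
case: Hphi => [[phiV' phiVK phiVK'] [phiD' phiDK phiDK'] phi_rv phi_src].
apply: (pi1_iso_comp (b1 := map phiD) (b2 := fun g => reduce rv (P g))).
  exact: (pi1_iso_map phiVK phiVK' phiDK phiDK' phi_rv phi_src).
by apply: pi1_iso_conj; rewrite ?tree_path_cancel // (tree_path_walk Htp).
Qed.

Lemma base_change_tree_loop f : f \notin tau ->
  reduce rv (P (map phiD (reduce rv (tree_loop rv src tp r f)))) =
  reduce rv (P (tree_loop' (phiD f))).
Proof.
case: Hphi => [[phiV' phiVK phiVK'] [phiD' phiDK phiDK'] phi_rv phi_src] Hf.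
rewrite (reducedK (tree_loop_reduced Htp tau_rv r Hf)).
by rewrite (map_tree_loop rvK phiVK phiVK' phiDK phiDK' phi_rv phi_src tau_rv tau_acyclic Htp Htp').
Qed.

Section Weights.
Variables (A : pzRingType) (wt : D -> A).
Hypotheses (wt_rv : forall f, wt (rv f) * wt f = 1) (wt_tree : {in tau, forall f, wt f = 1}).

Local Notation wt' f := (rho wt (P (tree_loop' f))).
Local Notation gauge_in x := (rho wt (tp' r' x)).
Local Notation gauge_out x := (rho wt (tp' x r')).

Lemma rho_tree_path x y : rho wt (tp x y) = 1.
Proof. exact: rho_eq1 wt_tree (tree_path_sub Htp x y). Qed.

Lemma rho_base_change g : rho wt (P g) = rho wt g.
Proof. by rewrite !rho_cat !rho_tree_path mulr1 mul1r. Qed.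

Lemma rho_tree_loop f : rho wt (tree_loop rv src tp r f) = wt f.
Proof. by rewrite rho_cat rho_cons !rho_tree_path mulr1 mul1r. Qed.

Lemma rho_closed_walk_image x g :
  walk rv src x x g -> all (fun f => f \in phiD @: tau) g -> rho wt g = 1.
Proof.
move=> Hw Hg; rewrite -(rho_reduce wt_rv).
case: Hphi => [[phiV' phiVK phiVK'] [phiD' phiDK phiDK'] phi_rv phi_src].
have acyclic' := acyclic_imset_aut phiVK phiVK' phiDK phiDK' phi_rv phi_src tau_acyclic.
by rewrite (acyclic_closed_walk_reduce rvK acyclic' Hw Hg).
Qed.

Lemma gauge_inK x : gauge_in x * gauge_out x = 1.
Proof.
rewrite -rho_cat; apply: (rho_closed_walk_image (x := x)).
  exact: walk_catP (tree_path_walk Htp' _ _) (tree_path_walk Htp' _ _).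
by rewrite all_cat !(tree_path_sub Htp').
Qed.

Lemma gauge_outK x : gauge_out x * gauge_in x = 1.
Proof.
rewrite -rho_cat; apply: (rho_closed_walk_image (x := r')).
  exact: walk_catP (tree_path_walk Htp' _ _) (tree_path_walk Htp' _ _).
by rewrite all_cat !(tree_path_sub Htp').
Qed.

Lemma regaugeE f : wt' f = gauge_out (tgt rv src f) * wt f * gauge_in (src f).
Proof. by rewrite rho_base_change rho_cat rho_cons. Qed.

Lemma rho_regauge x y g : walk rv src x y g ->
  rho (fun f => wt' f) g = gauge_out y * rho wt g * gauge_in x.
Proof.
move=> Hg; rewrite (eq_rho regaugeE).
exact: (rho_gauge wt gauge_inK gauge_outK Hg).
Qed.

Lemma regauge_tree f : f \in tau -> wt' (phiD f) = 1.
Proof.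
move=> Hf; rewrite rho_base_change.
apply: (rho_closed_walk_image (tree_loop_walk Htp' r' _)).
by rewrite all_cat /= !(tree_path_sub Htp') (imset_f phiD Hf).
Qed.

Lemma rho_regauge_closed g : walk rv src r' r' g ->
  rho (fun f => wt' f) g = rho wt (reduce rv (P g)).
Proof.
move=> Hg; rewrite (rho_regauge Hg) (rho_reduce wt_rv) rho_base_change.
have loop1 : gauge_out r' = 1.
  by apply: (rho_closed_walk_image (tree_path_walk Htp' r' r')); apply: tree_path_sub.
by rewrite loop1 mulr1 mul1r.
Qed.

Lemma rho_regauge_base : rho (fun f => wt' f) (tp r r' ++ tp' r' r) = gauge_in r.
Proof.
rewrite (rho_regauge (walk_catP (tree_path_walk Htp r r') (tree_path_walk Htp' r' r))).
by rewrite rho_cat rho_tree_path mulr1 gauge_outK mul1r.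
Qed.

Lemma rho_regauge_tree_loop f :
  wt f = gauge_in r * rho (fun f => wt' f) (tree_loop rv src tp r f) * gauge_out r.
Proof.
rewrite (rho_regauge (tree_loop_walk Htp r f)) rho_tree_loop.
by rewrite !mulrA gauge_inK mul1r -mulrA gauge_inK mulr1.
Qed.

End Weights.

Section CStarWeights.
Variables (R : realType) (A : algType R[i]) (C : cstar_struct A) (wt : D -> A).
Hypotheses (wt_unitary : forall f, unitary C (wt f))
           (wt_rv : forall f, wt (rv f) = star C (wt f))
           (wt_tree : {in tau, forall f, wt f = 1}).

Local Notation wt' f := (rho wt (P (tree_loop' f))).

Let wt_unit f : star C (wt f) * wt f = 1. Proof. by case: (wt_unitary f). Qed.
Let wt_rvK f : wt (rv f) * wt f = 1. Proof. by rewrite wt_rv wt_unit. Qed.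

Lemma regauge_aut_tree psi : star_aut C psi ->
    (forall f, f \notin tau -> psi (wt f) = wt' (phiD f)) ->
  forall f, psi (wt f) = wt' (phiD f).
Proof.
move=> aut_psi psi_wt f; have [Hf|/psi_wt //] := boolP (f \in tau).
by rewrite wt_tree // (star_aut1 aut_psi) (regauge_tree wt_rvK wt_tree).
Qed.

Lemma regauge_aut_rho psi : star_aut C psi -> (forall f, psi (wt f) = wt' (phiD f)) ->
  forall x, pi1 rv src r x -> psi (rho wt x) = rho wt (reduce rv (P (map phiD x))).
Proof.
move=> aut_psi psi_wt x /andP[Hx _].
case: Hphi => _ _ phi_rv phi_src.
have psi1 := star_aut1 aut_psi; case: aut_psi => _ _ _ psiM _.
rewrite (rho_map (w' := fun f => wt' f) psi1 psiM psi_wt).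
exact: (rho_regauge_closed wt_rvK wt_tree (walk_map phi_rv phi_src Hx)).
Qed.

Hypothesis wt_gen : cstar_generates C (fun a => exists f, a = wt f).

Lemma regauge_generates : cstar_generates C (fun a => exists f, a = wt' (phiD f)).
Proof.
move=> B subB Bwt'; apply: wt_gen => // _ [f ->].
case: Hphi => _ [phiD' _ phiDK'] _ _.
case: (subB) => B1 [_ _ BM Bstar _].
have Brho g : B (rho (fun f => wt' f) g).
  elim: g => [|h g IH]; first exact: B1.
  by rewrite rho_cons; apply: BM => //; apply: Bwt'; exists (phiD' h); rewrite phiDK'.
have gauge_out_star : rho wt (tp' r r') = star C (rho wt (tp' r' r)).
  rewrite -[LHS]mul1r -(rho_unitary wt_unit (tp' r' r)) -mulrA.
  by rewrite (gauge_inK wt_rvK) mulr1.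
have Bgauge : B (rho wt (tp' r' r)) by rewrite -(rho_regauge_base wt_rvK wt_tree).
rewrite (rho_regauge_tree_loop wt_rvK wt_tree) gauge_out_star.
by apply: (BM); [apply: (BM) | apply: Bstar].
Qed.

End CStarWeights.

End Regauge.

Unset Implicit Arguments.

Theorem mainTheorem3
  (V D : finType) (rev : D -> D) (src : D -> V)
  (Hgraph : graph_axioms rev) (Hconn : connected_graph rev src)
  (tau : {set D}) (r : V) (Htau : spanning_tree rev src tau)
  (tp : V -> V -> seq D) (Htp : tree_paths rev src tau tp)
  (R : realType) (A : algType R[i]) (C : cstar_struct A)
  (wt : D -> A)
  (Hunit : forall f, unitary C (wt f))
  (Hrev : forall f, wt (rev f) = star C (wt f))
  (Htree : forall f, f \in tau -> wt f = 1)
  (Hgen : cstar_generates C (fun a => exists f, a = wt f))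
  (phiV : V -> V) (phiD : D -> D) (Hphi : graph_aut rev src phiV phiD)
  (tp' : V -> V -> seq D) (Htp' : tree_paths rev src (phiD @: tau) tp') :
  let r' := phiV r in
  let P (g : seq D) := tp r r' ++ g ++ tp r' r in
  let l (f : D) := tp r (src f) ++ f :: tp (tgt rev src f) r in
  let l' (f : D) := tp' r' (src f) ++ f :: tp' (tgt rev src f) r' in
  let wt' (f : D) := rho wt (P (l' f)) in
  [/\ (* (1) *)
      (forall psi, star_aut C psi ->
         (forall f, f \notin tau -> psi (wt f) = wt' (phiD f)) ->
         forall f, psi (wt f) = wt' (phiD f))
      /\ (forall psi1 psi2, star_aut C psi1 -> star_aut C psi2 ->
           (forall f, f \notin tau -> psi1 (wt f) = wt' (phiD f)) ->
           (forall f, f \notin tau -> psi2 (wt f) = wt' (phiD f)) ->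
           psi1 =1 psi2),
      (* (2) *)
      cstar_generates C (fun a => exists f, a = wt' (phiD f))
    & (* (3) *)
      exists beta : seq D -> seq D,
        [/\ pi1_aut rev src r beta,
            forall f, f \notin tau ->
              beta (reduce rev (l f)) = reduce rev (P (l' (phiD f)))
          & forall psi, star_aut C psi ->
              (forall f, psi (wt f) = wt' (phiD f)) ->
              forall x, pi1 rev src r x -> psi (rho wt x) = rho wt (beta x)]].
Proof.
move=> r' P l l' wt'.
case: Hgraph => rvK _; case: Htau => tau_rv _ tau_acyclic.
have tree_aut := regauge_aut_tree rvK tau_acyclic Htp Hphi Htp' Hunit Hrev Htree (r := r).
split; first split.
- exact: tree_aut.
- move=> psi1 psi2 aut1 aut2 E1 E2.
  apply: (star_aut_eq aut1 aut2 Hgen) => _ [f ->].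
  by rewrite (tree_aut _ aut1 E1) (tree_aut _ aut2 E2).
- exact: (regauge_generates rvK tau_acyclic Htp Hphi Htp' Hunit Hrev Htree Hgen).
exists (fun x => reduce rev (P (map phiD x))); split.
- exact: (pi1_aut_base_change rvK tau_acyclic Htp Hphi).
- exact: (base_change_tree_loop rvK tau_rv tau_acyclic Htp Hphi Htp').
- exact: (regauge_aut_rho rvK tau_acyclic Htp Hphi Htp' Hunit Hrev Htree).
Qed.
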